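(* Let $M\in\mathbb{R}_+^{p\times q}$ be a slack matrix of a polyhedral cone, let $k=\operatorname{rank}(M)$, and let $M=AB$ with $A\in\mathbb{R}^{p\times k}$, $B\in\mathbb{R}^{k\times q}$, $\operatorname{rank}(A)=\operatorname{rank}(B)=k$. Let $K\subseteq\mathbb{R}^k$ be the cone generated by the rows of $A$. Then $K=\{x\in\mathbb{R}^k : x^TB\ge 0\}$, i.e., the columns of $B$ form an $\mathcal{H}$-representation of $K$. In particular, $M$ is a slack matrix of $K$.
   Context: A matrix $S\in\mathbb{R}^{p\times q}$ is a slack matrix of a polyhedral cone $K\subseteq\mathbb{R}^n$ if there are matrices $A\in\mathbb{R}^{p\times n}$ and $B\in\mathbb{R}^{n\times q}$ with $K=\{x\in\mathbb{R}^n: x^TB\ge 0\}=\{y^TA: y\in\mathbb{R}_+^p\}$ (the columns of $B$ form an $\mathcal{H}$-representation, the rows of $A$ a $\mathcal{V}$-representation of $K$) and $S=AB$. A matrix is a slack matrix of a polyhedral cone if it is a slack matrix of some polyhedral cone. *)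

From HB Require Import structures.
From mathcomp Require Import all_boot all_order all_algebra.
From mathcomp Require Import reals.
Set Implicit Arguments. Unset Strict Implicit. Unset Printing Implicit Defensive.
Import Order.TTheory GRing.Theory Num.Theory.
Local Open Scope ring_scope.

Definition hcone (R : realType) (n q : nat) (B : 'M[R]_(n, q)) : 'rV[R]_n -> Prop :=
  fun x => forall j : 'I_q, 0 <= (x *m B) 0 j.

Definition vcone (R : realType) (p n : nat) (A : 'M[R]_(p, n)) : 'rV[R]_n -> Prop :=
  fun x => exists y : 'rV[R]_p, (forall i : 'I_p, 0 <= y 0 i) /\ x = y *m A.

Definition slack_matrix_of (R : realType) (n p q : nat)
    (K : 'rV[R]_n -> Prop) (S : 'M[R]_(p, q)) : Prop :=
  exists (A : 'M[R]_(p, n)) (B : 'M[R]_(n, q)),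
    (forall x, K x <-> hcone B x) /\ (forall x, K x <-> vcone A x) /\ S = A *m B.

Definition is_slack_matrix (R : realType) (p q : nat) (S : 'M[R]_(p, q)) : Prop :=
  exists n : nat, exists K : 'rV[R]_n -> Prop, slack_matrix_of K S.

From HB Require Import structures.
From mathcomp Require Import all_boot all_order all_algebra.
From mathcomp Require Import reals.
Import Order.TTheory GRing.Theory Num.Theory.
Local Open Scope ring_scope.

(* Since M = A B has rank k and B has k rows, the row spaces of B and M agree.
   So for x with x B >= 0, the vector x B is a nonnegative vector in the row
   space of the slack matrix M; such vectors are nonnegative combinations y M
   of the rows of M (apply the two representations of the underlying cone).
   Then x B = y A B, and B being row free gives x = y A. The converse
   inclusion only uses that A B is entrywise nonnegative. *)

Lemma submx_mulmx_rank (F : fieldType) (p k q : nat)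
    (A : 'M[F]_(p, k)) (B : 'M[F]_(k, q)) :
  (\rank B <= \rank (A *m B))%N -> (B <= A *m B)%MS.
Proof.
by move=> rkB; rewrite -(mxrank_leqif_sup (submxMl A B)).2 eqn_leq mxrankM_maxr.
Qed.

Section Cones.

Variable R : realType.

Lemma vcone_sub_hcone (p k q : nat) (A : 'M[R]_(p, k)) (B : 'M[R]_(k, q)) :
  (forall i j, 0 <= (A *m B) i j) -> forall x, vcone A x -> hcone B x.
Proof.
move=> ABge0 x [y [yge0 ->]] j; rewrite -mulmxA mxE.
by apply: sumr_ge0 => i _; apply: mulr_ge0.
Qed.

Lemma slack_rowspace_ge0_vcone (p q : nat) (M : 'M[R]_(p, q)) (w : 'rV[R]_q) :
  is_slack_matrix M -> (w <= M)%MS -> (forall j, 0 <= w 0 j) -> vcone M w.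
Proof.
move=> [n [K [A [B [KH [KV ->]]]]]] /submxP[z ->] wge0.
have /KV[y [yge0 EzA]] : K (z *m A) by apply/KH => j; rewrite -mulmxA.
by exists y; split; rewrite // !mulmxA EzA.
Qed.

Lemma hcone_sub_vcone (p k q : nat) (A : 'M[R]_(p, k)) (B : 'M[R]_(k, q)) :
  is_slack_matrix (A *m B) -> \rank B = k -> \rank (A *m B) = k ->
  forall x, hcone B x -> vcone A x.
Proof.
move=> slackAB rkB rkAB x xB_ge0.
have BAB : (B <= A *m B)%MS by rewrite submx_mulmx_rank // rkB rkAB.
have [y [yge0 ExB]] : vcone (A *m B) (x *m B).
  by apply: slack_rowspace_ge0_vcone => //; apply: submx_trans BAB; exact: submxMl.
exists y; split => //.
have freeB : row_free B by rewrite /row_free rkB.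
by apply: (row_free_inj freeB); rewrite /= ExB mulmxA.
Qed.

End Cones.

Theorem lemma2p5 (R : realType) (p q k : nat) (M : 'M[R]_(p, q))
    (A : 'M[R]_(p, k)) (B : 'M[R]_(k, q)) :
  (forall i j, 0 <= M i j) ->
  is_slack_matrix M ->
  k = \rank M ->
  M = A *m B ->
  \rank A = k ->
  \rank B = k ->
  (forall x : 'rV[R]_k, vcone A x <-> hcone B x) /\
  slack_matrix_of (vcone A) M.
Proof.
move=> Mge0 slackM rkM EM _ rkB; subst M.
have vcone_hcone : forall x, vcone A x <-> hcone B x.
  move=> x; split; first exact: vcone_sub_hcone.
  exact: hcone_sub_vcone.
split=> //; exists A, B.
by split=> //; split.
Qed.
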